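(* Let $(\Sigma,E)$ be an algebraic theory with free monad $(T,\eta,\mu)$. If $f:(X,I^X)\to(Y,I^Y)$ is a homomorphism of $(\Sigma^{\mathrm{s}},E^{\mathrm{s}})$-algebras, and $\alpha:TX\to X$, $\beta:TY\to Y$ are given by $\alpha(\overline{t})=I^X(t)_{I^X(\mathsf{a})}$ and $\beta(\overline{s})=I^Y(s)_{I^Y(\mathsf{a})}$, then $f$ is a $T$-semialgebra homomorphism $(X,\alpha)\to(Y,\beta)$, i.e. $f\circ\alpha=\beta\circ Tf$.
   Context: $T=T_{\Sigma,E}$: $TX$ is the set of $\Sigma$-terms over $X$ modulo the smallest congruence containing all substitution instances of $E$; $Tf$ applies $f$ to variables. For a $\Sigma^{\mathrm{s}}$-algebra $(X,I)$, $I(t)_{I(\mathsf{a})}$ is the value of the $\Sigma$-term $t$ over $X$ obtained by sending each element $x$ occurring as a variable to $I(\mathsf{a})(x)$ and interpreting operations via $I$ (independent of the representative). The theory $(\Sigma^{\mathrm{s}},E^{\mathrm{s}})$: $\Sigma^{\mathrm{s}}=\Sigma\uplus\{\mathsf{a}:1\}$ and $E^{\mathrm{s}}$ consists of $\mathsf{a}\mathsf{a}v_1=\mathsf{a}v_1$; $\mathsf{a}(\mathsf{op}(v_1,\dots,v_n))=\mathsf{op}(v_1,\dots,v_n)$ and $\mathsf{op}(\mathsf{a}v_1,\dots,\mathsf{a}v_n)=\mathsf{op}(v_1,\dots,v_n)$ for every $(\mathsf{op}:n)\in\Sigma$; and $t(\mathsf{a}v_1,\dots,\mathsf{a}v_n)=s(\mathsf{a}v_1,\dots,\mathsf{a}v_n)$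 for every equation $t=s$ in $E$. A $T$-semialgebra is $\alpha:TX\to X$ with $\alpha\circ\mu_X=\alpha\circ T\alpha$. *)

From mathcomp Require Import all_boot.
Set Implicit Arguments. Unset Strict Implicit. Unset Printing Implicit Defensive.

Record signature := Sig { op : Type; arity : op -> nat }.

Inductive term (S : signature) (V : Type) : Type :=
| Var : V -> term S V
| Op : forall o : op S, ('I_(arity o) -> term S V) -> term S V.
Arguments Var {S V} _.
Arguments Op {S V} _ _.

Definition interp (S : signature) (X : Type) :=
  forall o : op S, ('I_(arity o) -> X) -> X.

Fixpoint eval (S : signature) (X : Type) (I : interp S X) (V : Type)
  (v : V -> X) (t : term S V) : X :=
  match t with
  | Var x => v x
  | Op o ts => I o (fun i => eval I v (ts i))
  end.

Fixpoint tmap (S : signature) (V W : Type) (f : V -> W) (t : term S V) : term S W :=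
  match t with
  | Var x => Var (f x)
  | Op o ts => Op o (fun i => tmap f (ts i))
  end.

Fixpoint subst (S : signature) (V W : Type) (s : V -> term S W) (t : term S V)
  : term S W :=
  match t with
  | Var x => s x
  | Op o ts => Op o (fun i => subst s (ts i))
  end.

Record theory := Theory {
  tsig : signature;
  teqs : term tsig nat -> term tsig nat -> Prop }.

(* Smallest congruence on Sigma-terms over X containing all substitution
   instances of E; T X is the quotient of term X by it. *)
Inductive tcong (Th : theory) (X : Type) : term (tsig Th) X -> term (tsig Th) X -> Prop :=
| tc_inst l r (s : nat -> term (tsig Th) X) :
    teqs l r -> tcong (subst s l) (subst s r)
| tc_refl t : tcong t t
| tc_sym t u : tcong t u -> tcong u t
| tc_trans t u w : tcong t u -> tcong u w -> tcong t w
| tc_op o ts us : (forall i, tcong (ts i) (us i)) -> tcong (Op o ts) (Op o us).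

(* The extended signature Sigma^s = Sigma + {a : 1}; [None] is the symbol a. *)
Definition sig_s (S : signature) : signature :=
  Sig (fun o : option (op S) => match o with Some o' => arity o' | None => 1 end).

Definition a_s (S : signature) (V : Type) (t : term (sig_s S) V) : term (sig_s S) V :=
  @Op (sig_s S) V None (fun _ : 'I_1 => t).

Fixpoint lift_s (S : signature) (V : Type) (t : term S V) : term (sig_s S) V :=
  match t with
  | Var x => Var x
  | Op o ts => @Op (sig_s S) V (Some o) (fun i => lift_s (ts i))
  end.

Inductive eqs_s (Th : theory) :
  term (sig_s (tsig Th)) nat -> term (sig_s (tsig Th)) nat -> Prop :=
| es_aa : eqs_s (a_s (a_s (Var 0))) (a_s (Var 0))
| es_aop (o : op (tsig Th)) :
    eqs_s (a_s (@Op (sig_s (tsig Th)) nat (Some o) (fun i => Var (nat_of_ord i))))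
          (@Op (sig_s (tsig Th)) nat (Some o) (fun i => Var (nat_of_ord i)))
| es_opa (o : op (tsig Th)) :
    eqs_s (@Op (sig_s (tsig Th)) nat (Some o) (fun i => a_s (Var (nat_of_ord i))))
          (@Op (sig_s (tsig Th)) nat (Some o) (fun i => Var (nat_of_ord i)))
| es_E (t s : term (tsig Th) nat) :
    teqs t s ->
    eqs_s (subst (fun n => a_s (Var n)) (lift_s t))
          (subst (fun n => a_s (Var n)) (lift_s s)).

Definition is_s_algebra (Th : theory) (X : Type) (I : interp (sig_s (tsig Th)) X) :=
  forall l r, eqs_s l r -> forall v : nat -> X, eval I v l = eval I v r.

Definition is_s_hom (Th : theory) (X Y : Type)
  (IX : interp (sig_s (tsig Th)) X) (IY : interp (sig_s (tsig Th)) Y) (f : X -> Y) :=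
  forall (o : op (sig_s (tsig Th))) (xs : 'I_(arity o) -> X),
    f (IX o xs) = IY o (fun i => f (xs i)).

(* I(t)_{I(a)} : value of the Sigma-term t over X, sending each variable x
   to I(a)(x) and interpreting operations via I. *)
Definition val_a (Th : theory) (X : Type) (I : interp (sig_s (tsig Th)) X)
  (t : term (tsig Th) X) : X :=
  eval (fun o => I (Some o)) (fun x => I None (fun _ => x)) t.

From mathcomp Require Import all_boot.
From Stdlib Require Import FunctionalExtensionality.

(* A homomorphism of Sigma^s-algebras is in particular a homomorphism of the
   Sigma-reducts, and it commutes with the unary operation a, which is the
   valuation used by [val_a]; so it commutes with [val_a]. *)

Lemma eval_tmap {S : signature} {X V W : Type} (I : interp S X) (v : W -> X)
    (g : V -> W) (t : term S V) :
  eval I v (tmap g t) = eval I (v \o g) t.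
Proof.
elim: t => [x|o ts IH] //=.
by congr (I o _); apply: functional_extensionality => i; exact: IH.
Qed.

Lemma eval_hom {S : signature} {X Y V : Type} {IX : interp S X} {IY : interp S Y}
    {f : X -> Y} (f_hom : forall o xs, f (IX o xs) = IY o (f \o xs))
    (v : V -> X) (t : term S V) :
  f (eval IX v t) = eval IY (f \o v) t.
Proof.
elim: t => [x|o ts IH] //=.
rewrite f_hom; congr (IY o _).
by apply: functional_extensionality => i; exact: IH.
Qed.

Theorem lemma15 (Th : theory) (X Y : Type)
  (IX : interp (sig_s (tsig Th)) X) (IY : interp (sig_s (tsig Th)) Y)
  (HX : is_s_algebra IX) (HY : is_s_algebra IY)
  (f : X -> Y) (Hf : is_s_hom IX IY f) :
  forall t : term (tsig Th) X, f (val_a IX t) = val_a IY (tmap f t).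
Proof.
move=> t; rewrite /val_a eval_tmap.
rewrite (eval_hom (IY := fun o => IY (Some o)) (fun o => Hf (Some o))).
by congr eval; apply: functional_extensionality => x; exact: (Hf None).
Qed.
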